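(* Let $f:\{0,1\}^N\to\{0,1\}$ be a partial function, and let $x\in\mathrm{Dom}(f)$. If $f(x)=0$, then \[\mathrm{C}_f(x)\leq\mathrm{RC}_f(x)(1+\log|f^{-1}(1)|)\] and if $f(x)=1$, then \[\mathrm{C}_f(x)\leq\mathrm{RC}_f(x)(1+\log|f^{-1}(0)|).\]
   Context: $\mathrm{C}_f(x)$ is the certificate complexity of $f$ at $x$ (minimum size of a partial assignment consistent with $x$ on which $f$ is constant over $\mathrm{Dom}(f)$). $\mathrm{RC}_f(x)$ is the randomized certificate complexity of $f$ at $x$, defined as the fractional block sensitivity of $x$ (the fractional packing number of the sensitive blocks of $x$). Logarithms are base 2. *)

From mathcomp Require Import all_boot all_order all_algebra.
From mathcomp Require Import all_classical all_reals all_analysis.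
Set Implicit Arguments. Unset Strict Implicit. Unset Printing Implicit Defensive.
Import Order.TTheory GRing.Theory Num.Theory.
Local Open Scope ring_scope.

Definition input (N : nat) := {ffun 'I_N -> bool}.

Definition pfun (N : nat) := input N -> option bool.

Definition dom (N : nat) (f : pfun N) : {set input N} :=
  [set x | f x != None].

Definition fpreim (N : nat) (f : pfun N) (b : bool) : {set input N} :=
  [set x | f x == Some b].

Definition is_cert (N : nat) (f : pfun N) (x : input N) (S : {set 'I_N}) : bool :=
  [forall y : input N, (y \in dom f) && [forall i in S, y i == x i] ==> (f y == f x)].

(* Certificate complexity C_f(x): minimum size of a certificate
   (setT is always a certificate, so the minimum is over a nonempty range). *)
Definition Ccomp (N : nat) (f : pfun N) (x : input N) : nat :=
  \big[minn/N]_(S : {set 'I_N} | is_cert f x S) #|S|.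

Definition flip (N : nat) (x : input N) (B : {set 'I_N}) : input N :=
  [ffun i => if i \in B then ~~ x i else x i].

Definition sensitive (N : nat) (f : pfun N) (x : input N) (B : {set 'I_N}) : bool :=
  (flip x B \in dom f) && (f (flip x B) != f x).

Definition frac_packing (R : realType) (N : nat) (f : pfun N) (x : input N)
    (w : {ffun {set 'I_N} -> R}) : Prop :=
  (forall B, 0 <= w B) /\
  (forall i : 'I_N, \sum_(B | sensitive f x B && (i \in B)) w B <= 1).

(* RC_f(x) = fractional block sensitivity of x: the fractional packing number
   of the sensitive blocks of x (supremum = maximum of the LP). *)
Definition RC (R : realType) (N : nat) (f : pfun N) (x : input N) : R :=
  sup [set v : R | exists w : {ffun {set 'I_N} -> R},
         frac_packing f x w /\ v = \sum_(B | sensitive f x B) w B].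

Definition log2 (R : realType) (r : R) : R := ln r / ln 2.

From mathcomp Require Import all_boot all_order all_algebra.
From mathcomp Require Import all_classical all_reals all_analysis.
From mathcomp Require Import ring lra zify.
Set Implicit Arguments. Unset Strict Implicit. Unset Printing Implicit Defensive.
Import Order.TTheory GRing.Theory Num.Theory.
Local Open Scope ring_scope.

(* Let b := ~~ f x and m := #|f^-1(b)|.  Every y in f^-1(b) differs from x on a
   sensitive block of x, and any set of coordinates meeting all these blocks is
   a certificate for x.  The greedy hitting set (repeatedly pick a coordinate
   lying in the most remaining blocks, say d of them, and give each of these
   blocks weight 1/d) produces S together with block weights p such that
   |S| <= sum p while every coordinate has load at most H_m <= 1 + log m
   (harmonic number).  Hence p / (1 + log m) is a fractional packing of
   sensitive blocks, and C_f(x) <= |S| <= RC_f(x) (1 + log m). *)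

Definition harmonic (R : numFieldType) (k : nat) : R := \sum_(j < k) (j.+1)%:R^-1.

Section Harmonic.
Variable R : numFieldType.

Lemma harmonic0 : harmonic R 0 = 0.
Proof. by rewrite /harmonic big_ord0. Qed.

Lemma harmonicS k : harmonic R k.+1 = harmonic R k + (k.+1)%:R^-1.
Proof. by rewrite /harmonic big_ord_recr. Qed.

Lemma harmonic_ge0 k : 0 <= harmonic R k.
Proof. by apply: sumr_ge0 => j _; rewrite invr_ge0 ler0n. Qed.

Lemma le_harmonic k l : (k <= l)%N -> harmonic R k <= harmonic R l.
Proof.
move/subnKC <-; elim: (l - k)%N => [|n IHn]; first by rewrite addn0.
by rewrite addnS harmonicS (le_trans IHn) // lerDl invr_ge0 ler0n.
Qed.

Lemma harmonicD_ge k a d : (k + a <= d)%N ->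
  harmonic R k + a%:R / d%:R <= harmonic R (k + a).
Proof.
elim: a => [|a IHa] le_kad; first by rewrite mul0r addr0 addn0.
rewrite addnS harmonicS -natr1 mulrDl mul1r addrA lerD ?IHa //; first lia.
by rewrite lef_pV2 ?posrE ?ltr0n ?ler_nat; lia.
Qed.

End Harmonic.

Lemma harmonic_le_1Dln (R : realType) m : (0 < m)%N ->
  harmonic R m <= 1 + ln (m%:R : R).
Proof.
elim: m => [//|[|m] IHm] _; first by rewrite harmonicS harmonic0 ln1 add0r addr0 invr1.
have m1_gt0 : 0 < (m.+1%:R : R) by rewrite ltr0n.
have step : ln (m.+1%:R : R) - ln (m.+2%:R) <= - (m.+2%:R)^-1.
  rewrite -ln_div ?posrE ?ltr0n //.
  have -> : (m.+1%:R / m.+2%:R : R) = 1 + - (m.+2%:R)^-1.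
    by rewrite -[m.+2%:R]natr1; field; rewrite gt_eqF // ltr_wpDr.
  apply: le_ln1Dx; rewrite ltrN2 invf_lt1 ?ltr0n ?ltr1n //.
rewrite harmonicS; apply: le_trans (lerD (IHm isT) (lexx _)) _.
move: step; set c := _^-1; lra.
Qed.

Lemma ln2_gt0 (R : realType) : 0 < ln (2 : R).
Proof. by rewrite ln_gt0 // ltr1n. Qed.

Lemma ln2_le1 (R : realType) : ln (2 : R) <= 1.
Proof. by rewrite -[2]/(1 + 1 : R) le_ln1Dx // (lt_trans _ ltr01) // ltrN10. Qed.

Lemma log2_natr_ge0 (R : realType) m : 0 <= log2 (m%:R : R).
Proof.
(* [m = 0] relies on the library convention [ln 0 = 0]. *)
case: m => [|m]; first by rewrite /log2 ln0 // mul0r.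
by rewrite divr_ge0 ?ln_ge0 ?ler1n // ltW // ln2_gt0.
Qed.

Lemma harmonic_le_1Dlog2 (R : realType) m : harmonic R m <= 1 + log2 (m%:R : R).
Proof.
case: m => [|m]; first by rewrite harmonic0 addr_ge0 ?log2_natr_ge0.
apply: le_trans (harmonic_le_1Dln R (ltn0Sn m)) _; rewrite lerD2l.
by rewrite ler_pdivlMr ?ln2_gt0 // ler_piMr ?ln_ge0 ?ler1n ?ln2_le1.
Qed.

Lemma card_sepID (T : finType) (A : {set T}) (P : pred T) :
  (#|[set x in A | P x]| + #|[set x in A | ~~ P x]|)%N = #|A|.
Proof.
rewrite -(cardsID [set x | P x] A).
by congr (_ + _)%N; apply: eq_card => x; rewrite !inE andbC.
Qed.

Section GreedyHittingSet.
Variables (R : numFieldType) (T : finType).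
Implicit Types (F : {set {set T}}) (S : {set T}) (p : {set T} -> R).

Definition degree F (i : T) : nat := #|[set B in F | i \in B]|.

Definition harmonic_hitting_set F S p : Prop :=
  [/\ {in F, forall B : {set T}, exists2 i, i \in S & i \in B},
      forall B, 0 <= p B,
      #|S|%:R <= \sum_(B in F) p B &
      forall i, \sum_(B in F | i \in B) p B <= harmonic R (degree F i)].

Lemma harmonic_hitting_set0 : harmonic_hitting_set finset.set0 finset.set0 (fun=> 0).
Proof. by split=> [B|//||i]; rewrite ?inE // ?cards0 big1 ?harmonic_ge0. Qed.

Section GreedyStep.
Variables (F : {set {set T}}) (i0 : T) (S' : {set T}) (p' : {set T} -> R).
Let d := degree F i0.
Let F' := [set B in F | i0 \notin B].
Hypothesis i0_max : forall i, (degree F i <= d)%N.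
Hypothesis d_gt0 : (0 < d)%N.
Hypothesis cover' : harmonic_hitting_set F' S' p'.

Let p (B : {set T}) : R := if i0 \in B then d%:R^-1 else p' B.

Lemma sum_greedy_weight (P : pred {set T}) :
  \sum_(B in F | P B) p B =
  #|[set B in F | P B && (i0 \in B)]|%:R / d%:R + \sum_(B in F' | P B) p' B.
Proof.
rewrite (bigID (fun B : {set T} => i0 \in B)) /=; congr (_ + _).
  rewrite (eq_bigr (fun=> d%:R^-1)) => [|B /andP[_ i0B]]; last by rewrite /p i0B.
  rewrite mulrC mulr_natr; set c := d%:R^-1; rewrite -sumr_const.
  by apply: eq_bigl => B; rewrite !inE andbA.
rewrite (eq_bigr p') => [|B /andP[_ /negPf i0B]]; last by rewrite /p i0B.
by apply: eq_bigl => B; rewrite !inE andbAC.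
Qed.

Lemma greedy_step : harmonic_hitting_set F (i0 |: S') p.
Proof.
have [hit' p'_ge0 size' load'] := cover'.
split.
- move=> B BF; case: (boolP (i0 \in B)) => [i0B|i0NB].
    by exists i0; rewrite ?setU11.
  have [|i iS iB] := hit' B; first by rewrite inE BF i0NB.
  by exists i; rewrite ?setU1r.
- by move=> B; rewrite /p; case: ifP; rewrite ?invr_ge0 ?ler0n.
- rewrite (eq_bigl (fun B => (B \in F) && true)) => [|B]; last by rewrite andbT.
  rewrite sum_greedy_weight (eq_bigl (mem F')) => [|B]; last by rewrite andbT.
  have -> : #|[set B in F | true & i0 \in B]| = d by apply: eq_card => B; rewrite !inE.
  rewrite mulfV ?pnatr_eq0 -?lt0n // cardsU1 natrD lerD //.
  by case: (i0 \notin S'); rewrite ?ler01.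
- move=> i; rewrite sum_greedy_weight.
  set a := #|_|.
  have deg_split : degree F i = (degree F' i + a)%N.
    rewrite /degree addnC -(card_sepID [set B in F | i \in B] (fun B => i0 \in B)).
    rewrite /a; congr (_ + _)%N; apply: eq_card => B; rewrite !inE; first by rewrite andbA.
    by rewrite andbAC.
  have le_d : (degree F' i + a <= d)%N by rewrite -deg_split.
  rewrite deg_split addrC; apply: le_trans (harmonicD_ge R le_d).
  by rewrite lerD2r.
Qed.

End GreedyStep.

Lemma greedy_hitting_set F : finset.set0 \notin F ->
  exists S, exists p, harmonic_hitting_set F S p.
Proof.
elim: {F}_.+1 {-2}F (ltnSn #|F|) => // n IHn F cardF F0.
have [->|/set0Pn[B0 B0F]] := eqVneq F finset.set0.
  by exists finset.set0, (fun=> 0); exact: harmonic_hitting_set0.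
have /set0Pn[j jB0] : B0 != finset.set0 by apply: contraNneq F0 => <-.
pose i0 := [arg max_(i > j) degree F i].
have i0_max i : (degree F i <= degree F i0)%N.
  by rewrite /i0; case: arg_maxnP => // k _; apply.
have d_gt0 : (0 < degree F i0)%N.
  by apply: leq_trans (i0_max j); rewrite card_gt0; apply/set0Pn; exists B0; rewrite inE B0F.
have [S' [p' cover']] : exists S p, harmonic_hitting_set [set B in F | i0 \notin B] S p.
  apply: IHn.
  - by move: cardF d_gt0; rewrite /degree -(card_sepID F (fun B => i0 \in B)); lia.
  - by apply: contra F0; rewrite inE => /andP[].
by exists (i0 |: S'); exact: ex_intro _ _ (greedy_step i0_max d_gt0 cover').
Qed.

End GreedyHittingSet.

Lemma bigmin_le_cond (I : finType) (P : pred I) (F : I -> nat) n0 i :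
  P i -> (\big[minn/n0]_(j | P j) F j <= F i)%N.
Proof.
move=> Pi; have : i \in index_enum I by rewrite mem_index_enum.
elim: (index_enum I) => //= j s IHs; rewrite inE big_cons.
case/orP => [/eqP <-|/IHs le_i]; first by rewrite Pi geq_minl.
by case: ifP => // _; rewrite geq_min le_i orbT.
Qed.

Section SensitiveBlocks.
Variables (N : nat) (f : pfun N) (x : input N).

Definition mismatch (y : input N) : {set 'I_N} := [set i | y i != x i].

Lemma flip_set0 : flip x finset.set0 = x.
Proof. by apply/ffunP => i; rewrite ffunE inE. Qed.

Lemma flip_mismatch y : flip x (mismatch y) = y.
Proof. by apply/ffunP => i; rewrite ffunE inE; case: (y i) (x i) => [] []. Qed.

Lemma sensitive_neq0 B : sensitive f x B -> B != finset.set0.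
Proof. by apply: contraTneq => ->; rewrite /sensitive flip_set0 eqxx andbF. Qed.

Lemma sensitive_mismatch b y :
  f x = Some (~~ b) -> y \in fpreim f b -> sensitive f x (mismatch y).
Proof.
by move=> fx; rewrite inE => /eqP fy; rewrite /sensitive flip_mismatch inE fy fx; case: (b).
Qed.

Lemma is_cert_hitting b (S : {set 'I_N}) : f x = Some (~~ b) ->
  {in fpreim f b, forall y, exists2 i, i \in S & i \in mismatch y} -> is_cert f x S.
Proof.
move=> fx hitS; apply/forallP => y; apply/implyP => /andP[yf /forallP agree].
apply/negPn/negP => fy_neq.
have [|i iS] := hitS y.
  by move: yf fy_neq; rewrite !inE fx; case: (f y) => [c|] //; case: (b) c => [] [].
by rewrite inE; have := agree i; rewrite iS => /eqP ->; rewrite eqxx.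
Qed.

Lemma Ccomp_le_card (S : {set 'I_N}) : is_cert f x S -> (Ccomp f x <= #|S|)%N.
Proof. exact: bigmin_le_cond. Qed.

Variable R : realType.

Lemma RC_ge_sum (w : {ffun {set 'I_N} -> R}) :
  frac_packing f x w -> \sum_(B | sensitive f x B) w B <= RC R f x.
Proof.
move=> wP; apply: ub_le_sup; last by exists w.
exists (\sum_(B | sensitive f x B) (1 : R)) => _ [w' [[w'_ge0 w'_load] ->]].
apply: ler_sum => B sB; have /set0Pn[i iB] := sensitive_neq0 sB.
apply: le_trans (w'_load i); rewrite (bigD1 B) /=; last by rewrite sB iB.
by rewrite lerDl sumr_ge0.
Qed.

Lemma RC_ge_weighted (F : {set {set 'I_N}}) (p : {set 'I_N} -> R) c :
  {in F, forall B, sensitive f x B} -> {in F, forall B, 0 <= p B} -> 0 < c ->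
  (forall i, \sum_(B in F | i \in B) p B <= c) ->
  \sum_(B in F) p B <= RC R f x * c.
Proof.
move=> F_sens p_ge0 c_gt0 load.
pose w := [ffun B => if B \in F then p B / c else 0].
have sum_w (P : pred {set 'I_N}) :
    \sum_(B | sensitive f x B && P B) w B = (\sum_(B in F | P B) p B) / c.
  rewrite mulr_suml big_mkcond [RHS]big_mkcond; apply: eq_bigr => B _.
  rewrite ffunE; case BF: (B \in F) => /=; first by rewrite F_sens.
  by case: ifP.
have wP : frac_packing f x w.
  split=> [B|i]; last by rewrite sum_w ler_pdivrMr // mul1r.
  by rewrite ffunE; case: ifP => // BF; rewrite divr_ge0 ?p_ge0 // ltW.
have sum_all : (\sum_(B in F) p B) / c = \sum_(B | sensitive f x B) w B.
  rewrite -[X in X / c](eq_bigl _ _ (fun B => andbT (B \in F))) -sum_w.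
  by apply: eq_bigl => B; rewrite andbT.
by rewrite -ler_pdivrMr // sum_all RC_ge_sum.
Qed.

End SensitiveBlocks.

Lemma Ccomp_le_RC_log2 (R : realType) N (f : pfun N) (x : input N) b :
  f x = Some (~~ b) ->
  (Ccomp f x)%:R <= RC R f x * (1 + log2 (#|fpreim f b|%:R : R)).
Proof.
move=> fx; set c := 1 + log2 _.
pose F := mismatch x @: fpreim f b.
have F_sens : {in F, forall B, sensitive f x B}.
  by move=> _ /imsetP[y yb ->]; exact: sensitive_mismatch fx yb.
have F0 : finset.set0 \notin F by apply/negP => /F_sens/sensitive_neq0/eqP.
have [S [p [hitS p_ge0 sizeS loadp]]] := greedy_hitting_set R F0.
have certS : is_cert f x S.
  by apply: (is_cert_hitting fx) => y yb; apply: hitS; rewrite imset_f.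
have load_c i : \sum_(B in F | i \in B) p B <= c.
  apply: le_trans (loadp i) (le_trans (le_harmonic _ _) (harmonic_le_1Dlog2 _ _)).
  apply: leq_trans (leq_imset_card (mismatch x) _); apply: subset_leq_card.
  by apply/fintype.subsetP => B; rewrite inE => /andP[].
have c_gt0 : 0 < c by rewrite ltr_wpDr ?log2_natr_ge0.
apply: le_trans (RC_ge_weighted F_sens (fun B _ => p_ge0 B) c_gt0 load_c).
by apply: le_trans sizeS; rewrite ler_nat (Ccomp_le_card certS).
Qed.

Theorem lemma21 (R : realType) (N : nat) (f : pfun N) (x : input N) :
  x \in dom f ->
  (f x = Some false ->
     (Ccomp f x)%:R <= RC R f x * (1 + log2 (#|fpreim f true|%:R : R))) /\
  (f x = Some true ->
     (Ccomp f x)%:R <= RC R f x * (1 + log2 (#|fpreim f false|%:R : R))).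
Proof.
move=> _; split.
- exact: (@Ccomp_le_RC_log2 R N f x true).
- exact: (@Ccomp_le_RC_log2 R N f x false).
Qed.
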